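(* Let $f$ be as in the standing setting and satisfy quadratic functional growth with constant $\kappa_f>0$: $f(x)-f^*\ge\frac{\kappa_f}{2}\|x-\bar x\|^2$ for all $x\in X$. Let $x^0\in X$ and $x^{k+1}=[x^k-\frac1{L_f}\nabla f(x^k)]_X$ for $k\ge0$, and $\bar x^k=[x^k]_{X^*}$. Then, with $\mu_f=\kappa_f/L_f$, $$\|x^k-\bar x^k\|^2\le\left(\frac{1}{1+\mu_f}\right)^k\|x^0-\bar x^0\|^2\qquad\forall k\ge0.$$
   Context: Standing setting: $X\subseteq\mathbb{R}^n$ is a nonempty closed convex set; $f:X\to\mathbb{R}$ is convex and continuously differentiable, with $L_f$-Lipschitz continuous gradient on $X$ ($L_f>0$). Consider $f^*=\min_{x\in X}f(x)$ with optimal set $X^*$ nonempty and closed and $f^*$ finite. $\|\cdot\|$ is the Euclidean norm, $[u]_S$ is the Euclidean projection onto a closed convex set $S$, and $\bar x=[x]_{X^*}$. *)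

From mathcomp Require Import ssreflect ssrbool eqtype ssrnat fintype bigop.
From Stdlib Require Import Reals.
Open Scope R_scope.

Definition vec (n : nat) := 'I_n -> R.

Definition vadd {n} (u v : vec n) : vec n := fun i => u i + v i.
Definition vsub {n} (u v : vec n) : vec n := fun i => u i - v i.
Definition vscale {n} (a : R) (u : vec n) : vec n := fun i => a * u i.

Definition inner {n} (u v : vec n) : R := \big[Rplus/0]_(i < n) (u i * v i).
Definition norm {n} (u : vec n) : R := sqrt (inner u u).

Definition convex_vset {n} (S : vec n -> Prop) : Prop :=
  forall x y t, S x -> S y -> 0 <= t <= 1 ->
    S (vadd (vscale t x) (vscale (1 - t) y)).

Definition closed_vset {n} (S : vec n -> Prop) : Prop :=
  forall x, (forall eps, 0 < eps -> exists y, S y /\ norm (vsub x y) < eps) -> S x.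

Definition convex_on {n} (S : vec n -> Prop) (f : vec n -> R) : Prop :=
  forall x y t, S x -> S y -> 0 <= t <= 1 ->
    f (vadd (vscale t x) (vscale (1 - t) y)) <= t * f x + (1 - t) * f y.

Definition has_gradient_at {n} (f : vec n -> R) (x gx : vec n) : Prop :=
  forall eps, 0 < eps -> exists delta, 0 < delta /\
    forall y, norm (vsub y x) < delta ->
      Rabs (f y - f x - inner gx (vsub y x)) <= eps * norm (vsub y x).

Definition is_proj {n} (S : vec n -> Prop) (x y : vec n) : Prop :=
  S y /\ forall z, S z -> norm (vsub x y) <= norm (vsub x z).

(* Against any minimiser y, a projected gradient step from x satisfies
   f(x+) - f* <= L/2 (|x - y|^2 - |x+ - y|^2): the descent lemma bounds f(x+)
   from above, the gradient inequality bounds f(x) from below by f(y), and the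
   obtuse-angle property of the projection disposes of the gradient terms.
   Taking y = xbar, the projection of x on the optimal set, and using
   |x+ - xbar+| <= |x+ - xbar| and quadratic growth at x+ gives
   (1 + kappa/L) |x+ - xbar+|^2 <= |x - xbar|^2. *)

From HB Require Import structures.
From Coquelicot Require Import Coquelicot.
From mathcomp Require Import ssreflect ssrbool eqtype ssrnat fintype bigop.
From Stdlib Require Import Reals Lra Psatz FunctionalExtensionality.
Open Scope R_scope.

HB.instance Definition _ := Monoid.isComLaw.Build R 0 Rplus
  (fun a b c => Logic.eq_sym (Rplus_assoc a b c)) Rplus_comm Rplus_0_l.

Ltac vec_ext :=
  apply: functional_extensionality => i; rewrite /vsub /vadd /vscale; ring.

Lemma derivable_pt_lim_le_chord (phi : R -> R) (l : R) :
  derivable_pt_lim phi 0 l ->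
  (forall t, 0 < t <= 1 -> phi t <= (1 - t) * phi 0 + t * phi 1) ->
  l <= phi 1 - phi 0.
Proof.
move=> Hd Hconv; apply: Rnot_lt_le => Hlt.
have [delta Hdelta] := Hd (l - (phi 1 - phi 0)) ltac:(lra).
have Hdel := cond_pos delta.
set t := Rmin (delta / 2) 1.
have Ht : 0 < t <= 1 by split; [apply: Rmin_pos; lra | apply: Rmin_r].
have Htd : Rabs t < delta.
  by rewrite Rabs_pos_eq; [have := Rmin_l (delta / 2) 1; rewrite -/t; lra | lra].
have := Hdelta t ltac:(lra) Htd; rewrite Rplus_0_l.
set q := (phi t - phi 0) / t => Hq.
have Eq : q * t = phi t - phi 0 by rewrite /q; field; lra.
have := Rle_abs (- (q - l)); rewrite Rabs_Ropp.
have := Hconv t Ht; nra.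
Qed.

Lemma geometric_decay (a : nat -> R) (r : R) :
  0 <= r -> (forall k, a (S k) <= r * a k) -> forall k, a k <= r ^ k * a 0%nat.
Proof.
move=> Hr Ha; elim=> [|k IH]; first by rewrite pow_O; lra.
rewrite /= Rmult_assoc; apply: (Rle_trans _ _ _ (Ha k)).
exact: Rmult_le_compat_l.
Qed.

Section Inner.
Context {n : nat}.
Implicit Types (u v w x y z p d gz : vec n) (f : vec n -> R).

Lemma inner_sym u v : inner u v = inner v u.
Proof. by rewrite /inner; apply: eq_bigr => i _; ring. Qed.

Lemma inner_addl u v w : inner (vadd u v) w = inner u w + inner v w.
Proof. by rewrite /inner -big_split /=; apply: eq_bigr => i _; rewrite /vadd; ring. Qed.

Lemma inner_scalel a u w : inner (vscale a u) w = a * inner u w.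
Proof.
rewrite /inner; apply: (big_rec2 (fun s1 s2 => s1 = a * s2)); first ring.
by move=> i s1 s2 _ ->; rewrite /vscale; ring.
Qed.

Lemma inner_subl u v w : inner (vsub u v) w = inner u w - inner v w.
Proof.
have -> : vsub u v = vadd u (vscale (-1) v) by vec_ext.
rewrite inner_addl inner_scalel; ring.
Qed.

Lemma inner_addr u v w : inner w (vadd u v) = inner w u + inner w v.
Proof. by rewrite inner_sym inner_addl !(inner_sym w). Qed.

Lemma inner_scaler a u w : inner w (vscale a u) = a * inner w u.
Proof. by rewrite inner_sym inner_scalel inner_sym. Qed.

Lemma inner_subr u v w : inner w (vsub u v) = inner w u - inner w v.
Proof. by rewrite inner_sym inner_subl !(inner_sym w). Qed.

Lemma inner_ge0 u : 0 <= inner u u.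
Proof.
rewrite /inner; apply: (big_ind (fun s => 0 <= s)); [lra | move=> *; lra |].
by move=> i _; nra.
Qed.

Lemma norm_sq u : norm u ^ 2 = inner u u.
Proof. by rewrite /norm /= Rmult_1_r sqrt_sqrt //; apply: inner_ge0. Qed.

Lemma norm_ge0 u : 0 <= norm u.
Proof. exact: sqrt_pos. Qed.

Lemma norm_scale a u : norm (vscale a u) = Rabs a * norm u.
Proof.
rewrite /norm inner_scalel inner_scaler -Rmult_assoc sqrt_mult.
- by rewrite -Rsqr_def sqrt_Rsqr_abs.
- exact: Rle_0_sqr.
- exact: inner_ge0.
Qed.

Lemma inner_sub_scale u v a :
  inner (vsub u (vscale a v)) (vsub u (vscale a v)) =
  inner u u - 2 * a * inner u v + a ^ 2 * inner v v.
Proof. by rewrite !inner_subl !inner_subr !inner_scalel !inner_scaler (inner_sym v u); ring. Qed.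

Lemma inner_sub_three_points x y z :
  inner (vsub x y) (vsub x y) - inner (vsub z y) (vsub z y) =
  inner (vsub z x) (vsub z x) + 2 * inner (vsub x z) (vsub z y).
Proof.
have -> : vsub x y = vadd (vsub x z) (vsub z y) by vec_ext.
have -> : vsub z x = vscale (-1) (vsub x z) by vec_ext.
rewrite (inner_addl (vsub x z)) !(inner_addr (vsub x z)) !inner_scalel !inner_scaler.
rewrite (inner_sym (vsub z y) (vsub x z)); ring.
Qed.

Lemma inner_le_of_norm_le u v a :
  0 < a -> inner u u <= a ^ 2 * inner v v -> inner u v <= a * inner v v.
Proof. by move=> Ha Huv; have := inner_ge0 (vsub u (vscale a v)); rewrite inner_sub_scale; nra. Qed.

Lemma vadd_vscale_vsub (x y : vec n) (t : R) :
  vadd x (vscale t (vsub y x)) = vadd (vscale t y) (vscale (1 - t) x).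
Proof. by vec_ext. Qed.

Lemma is_proj_sq_le (S : vec n -> Prop) v p z :
  is_proj S v p -> S z -> norm (vsub v p) ^ 2 <= norm (vsub v z) ^ 2.
Proof.
move=> [_ Hmin] Sz; have := Hmin z Sz.
have := norm_ge0 (vsub v p); nra.
Qed.

Lemma proj_obtuse (S : vec n -> Prop) v p z :
  convex_vset S -> is_proj S v p -> S z -> inner (vsub v p) (vsub z p) <= 0.
Proof.
move=> HS [Sp Hmin] Sz.
set a := inner (vsub v p) (vsub z p); set b := inner (vsub z p) (vsub z p).
have Hb : 0 <= b by apply: inner_ge0.
(* minimality of p against the points p + t (z - p) of the segment [p, z] *)
have Hseg t : 0 < t <= 1 -> 2 * a <= t * b.
  move=> Ht.
  have St := HS z p t Sz Sp ltac:(lra).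
  have := Hmin _ St; rewrite -vadd_vscale_vsub => Hle.
  have E : vsub v (vadd p (vscale t (vsub z p))) = vsub (vsub v p) (vscale t (vsub z p))
    by vec_ext.
  have := inner_sub_scale (vsub v p) (vsub z p) t.
  rewrite -/a -/b -E -!norm_sq.
  have := norm_ge0 (vsub v p); have := norm_ge0 (vsub v (vadd p (vscale t (vsub z p)))).
  nra.
apply: Rnot_lt_le => Ha.
have Et : a / (a + b + 1) * (a + b + 1) = a by field; lra.
have Ht0 : 0 < a / (a + b + 1) by apply: Rdiv_lt_0_compat; lra.
have := Hseg (a / (a + b + 1)) ltac:(split; nra); nra.
Qed.

Lemma has_gradient_at_line f x d gz t0 :
  has_gradient_at f (vadd x (vscale t0 d)) gz ->
  derivable_pt_lim (fun t => f (vadd x (vscale t d))) t0 (inner gz d).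
Proof.
move=> Hg eps Heps.
have Nd := norm_ge0 d.
have [delta [Hdel Hd]] := Hg (eps / 2 / (norm d + 1)) ltac:(apply: Rdiv_lt_0_compat; lra).
have Hdp : 0 < delta / (norm d + 1) by apply: Rdiv_lt_0_compat; lra.
exists (mkposreal _ Hdp) => h Hh /= Hhd.
have E : vsub (vadd x (vscale (t0 + h) d)) (vadd x (vscale t0 d)) = vscale h d by vec_ext.
have Hh0 : 0 < Rabs h by apply: Rabs_pos_lt.
have Ehd : Rabs h * (norm d + 1) < delta.
  have := Rmult_lt_compat_r (norm d + 1) _ _ ltac:(lra) Hhd.
  by have -> : delta / (norm d + 1) * (norm d + 1) = delta by field; lra.
have Hnear : norm (vsub (vadd x (vscale (t0 + h) d)) (vadd x (vscale t0 d))) < delta.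
  by rewrite E norm_scale; nra.
have := Hd _ Hnear.
rewrite E norm_scale inner_scaler.
set A := f _ - f _; set e := eps / 2 / (norm d + 1) => Hlin.
have Ee : e * (norm d + 1) = eps / 2 by rewrite /e; field; lra.
have -> : A / h - inner gz d = (A - h * inner gz d) / h by field.
rewrite Rabs_div //.
set r := Rabs (A - h * inner gz d) in Hlin *.
have -> : r / Rabs h = r * / Rabs h by [].
apply: (Rmult_lt_reg_r (Rabs h)) => //.
rewrite Rmult_assoc Rinv_l; last lra.
have : e * norm d < eps by nra.
nra.
Qed.

Lemma convex_gradient_ineq (S : vec n -> Prop) f x y gx :
  convex_on S f -> has_gradient_at f x gx -> S x -> S y ->
  f x + inner gx (vsub y x) <= f y.
Proof.
move=> Hf Hg Sx Sy.
have E0 : vadd x (vscale 0 (vsub y x)) = x by vec_ext.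
have E1 : vadd x (vscale 1 (vsub y x)) = y by vec_ext.
have Hd := has_gradient_at_line f x (vsub y x) gx 0 ltac:(by rewrite E0).
suff : inner gx (vsub y x) <= f y - f x by lra.
have := derivable_pt_lim_le_chord _ _ Hd; rewrite /= E0 E1; apply=> t Ht.
rewrite vadd_vscale_vsub Rplus_comm.
by apply: Hf => //; lra.
Qed.

End Inner.

Section ProjectedGradient.
Context {n : nat} (X : vec n -> Prop) (f : vec n -> R) (g : vec n -> vec n) (L : R).
Hypothesis HX : convex_vset X.
Hypothesis Hgrad : forall z, X z -> has_gradient_at f z (g z).
Hypothesis HL : 0 < L.
Hypothesis HLip : forall u v, X u -> X v -> norm (vsub (g u) (g v)) <= L * norm (vsub u v).

Lemma descent_lemma x y : X x -> X y ->
  f y <= f x + inner (g x) (vsub y x) + L / 2 * inner (vsub y x) (vsub y x).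
Proof.
move=> Xx Xy.
set d := vsub y x; set A := inner (g x) d; set B := L / 2 * inner d d.
set p := fun t => vadd x (vscale t d).
have Xp t : 0 <= t <= 1 -> X (p t) by move=> Ht; rewrite /p vadd_vscale_vsub; apply: HX.
set phi := fun t => f (p t) - (t * A + B * (t * t)).
set phi' := fun t => inner (g (p t)) d - (A + B * (2 * t)).
have Hd c : 0 <= c <= 1 -> derivable_pt_lim phi c (phi' c).
  move=> Hc; apply: derivable_pt_lim_minus.
    exact: has_gradient_at_line (Hgrad _ (Xp _ Hc)).
  by apply/is_derive_Reals; auto_derive => //; ring_simplify.
have [c [Hphi Hc]] := MVT_cor2 phi phi' 0 1 Rlt_0_1 Hd.
have Hphi' : phi' c <= 0.
  have Hpc : vsub (p c) x = vscale c d by rewrite /p; vec_ext.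
  have := HLip _ _ (Xp c ltac:(lra)) Xx.
  rewrite Hpc norm_scale Rabs_pos_eq; last lra.
  move=> Hlip.
  have Hsq : inner (vsub (g (p c)) (g x)) (vsub (g (p c)) (g x)) <= (L * c) ^ 2 * inner d d.
    rewrite -!norm_sq.
    have := norm_ge0 (vsub (g (p c)) (g x)); have := norm_ge0 d.
    have : 0 <= L * c by nra.
    nra.
  have HLc : 0 < L * c by nra.
  have := inner_le_of_norm_le _ _ _ HLc Hsq.
  by rewrite inner_subl /phi' /B -/A; lra.
have Ep0 : p 0 = x by rewrite /p /d; vec_ext.
have Ep1 : p 1 = y by rewrite /p /d; vec_ext.
rewrite /phi Ep0 Ep1 /B in Hphi; rewrite -/d -/A /B; nra.
Qed.

Lemma projected_gradient_step x y xp :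
  convex_on X f -> X x -> X y ->
  is_proj X (vsub x (vscale (1 / L) (g x))) xp ->
  f xp - f y <= L / 2 * (inner (vsub x y) (vsub x y) - inner (vsub xp y) (vsub xp y)).
Proof.
move=> Hf Xx Xy Hxp.
have Xxp : X xp by case: Hxp.
have Hdesc := descent_lemma _ _ Xx Xxp.
have Hconv := convex_gradient_ineq _ _ _ _ _ Hf (Hgrad _ Xx) Xx Xy.
have Hobt : L * inner (vsub x xp) (vsub y xp) <= inner (g x) (vsub y xp).
  have := proj_obtuse _ _ _ _ HX Hxp Xy.
  have -> : vsub (vsub x (vscale (1 / L) (g x))) xp = vsub (vsub x xp) (vscale (1 / L) (g x))
    by vec_ext.
  rewrite inner_subl inner_scalel => H.
  have -> : inner (g x) (vsub y xp) = L * (1 / L * inner (g x) (vsub y xp)) by field; lra.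
  by apply: Rmult_le_compat_l; lra.
rewrite inner_sub_three_points.
move: Hobt Hdesc Hconv; rewrite !inner_subr; lra.
Qed.

End ProjectedGradient.

Theorem theorem12 (n : nat) (X : vec n -> Prop) (f : vec n -> R)
  (g : vec n -> vec n) (Lf kappa fstar : R)
  (x xbar : nat -> vec n)
  (HXne : exists x0, X x0)
  (HXcl : closed_vset X) (HXcv : convex_vset X)
  (Hfcv : convex_on X f)
  (Hgrad : forall x, X x -> has_gradient_at f x (g x))
  (HgC : forall x, X x -> forall eps, 0 < eps -> exists delta, 0 < delta /\
           forall y, X y -> norm (vsub y x) < delta -> norm (vsub (g y) (g x)) < eps)
  (HLpos : 0 < Lf)
  (HLip : forall x y, X x -> X y -> norm (vsub (g x) (g y)) <= Lf * norm (vsub x y))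
  (Hfstar_lb : forall x, X x -> fstar <= f x)
  (Hstar_ne : exists xs, X xs /\ f xs = fstar)
  (Hstar_cl : closed_vset (fun z => X z /\ f z = fstar))
  (Hkpos : 0 < kappa)
  (Hqfg : forall x xb, X x -> is_proj (fun z => X z /\ f z = fstar) x xb ->
            f x - fstar >= kappa / 2 * (norm (vsub x xb)) ^ 2)
  (Hx0 : X (x 0%nat))
  (Hstep : forall k, is_proj X (vsub (x k) (vscale (1 / Lf) (g (x k)))) (x (S k)))
  (Hbar : forall k, is_proj (fun z => X z /\ f z = fstar) (x k) (xbar k)) :
  forall k : nat,
    (norm (vsub (x k) (xbar k))) ^ 2 <=
      (1 / (1 + kappa / Lf)) ^ k * (norm (vsub (x 0%nat) (xbar 0%nat))) ^ 2.
Proof.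
have Xx k : X (x k) by case: k => [|k] //; case: (Hstep k).
have Hmu : 0 < kappa / Lf by apply: Rdiv_lt_0_compat.
apply: geometric_decay; first by apply/Rlt_le/Rdiv_lt_0_compat; lra.
move=> k; have [[Xxbar Hfxbar] _] := Hbar k.
have Hgap := projected_gradient_step _ _ _ _ HXcv Hgrad HLpos HLip _ _ _
  Hfcv (Xx k) Xxbar (Hstep k).
have Hgrowth := Hqfg _ _ (Xx (S k)) (Hbar (S k)).
have Hclosest := is_proj_sq_le _ _ _ _ (Hbar (S k)) (conj Xxbar Hfxbar).
rewrite Hfxbar -!norm_sq in Hgap.
set d1 := norm (vsub (x (S k)) (xbar (S k))) ^ 2 in Hgrowth Hclosest *.
set d0 := norm (vsub (x k) (xbar k)) ^ 2 in Hgap *.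
have Ekappa : kappa = kappa / Lf * Lf by field; lra.
have Hcontr : (1 + kappa / Lf) * d1 <= d0 by nra.
apply: (Rmult_le_reg_l (1 + kappa / Lf)); first lra.
by have -> : (1 + kappa / Lf) * (1 / (1 + kappa / Lf) * d0) = d0 by field; lra.
Qed.
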